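(* Let $s,t\in[0,\infty[$, $r\in[1,\infty[$ with $r'=\frac r{r-1}$, and $b\in[-1,1]$. Let $\varkappa(r)=\sup_{u\in]0,1[}\big[(1+u^{1/r})(1+u^{1/r'})(1+u^{1/2})^{-2}\big]$. Then (l1) $\frac4{rr'}(s^{r/2}-t^{r/2})^2\le(s-t)(s^{r-1}-t^{r-1})\le(s^{r/2}-t^{r/2})^2$; (l2) $(s^{r/2}+t^{r/2})^2\le(s+t)(s^{r-1}+t^{r-1})\le\varkappa(r)(s^{r/2}+t^{r/2})^2$; (l3) $\frac4{rr'}(s^r+t^r+2b(st)^{r/2})\le s^r+t^r+b(st^{r-1}+ts^{r-1})$; (l4) $|b|\,|st^{r-1}-ts^{r-1}|\le\frac{|r-2|}{2\sqrt{r-1}}\big[s^r+t^r-\sqrt{1-b^2}(st^{r-1}+ts^{r-1})\big]$; (l5) $s^r+t^r+b(st^{r-1}+ts^{r-1})\le\varkappa(r)(s^r+t^r+2b(st)^{r/2})$. *)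

From HB Require Import structures.
From mathcomp Require Import all_boot all_order all_algebra.
From mathcomp Require Import all_classical all_reals all_analysis.
Set Implicit Arguments. Unset Strict Implicit. Unset Printing Implicit Defensive.
Import Order.TTheory GRing.Theory Num.Theory.
Local Open Scope classical_set_scope.
Local Open Scope ring_scope.

(* 1/r' where r' = r/(r-1) is the conjugate exponent; for r = 1, r' = +oo
   and 1/r' = 0, so 1/r' = (r-1)/r for all r >= 1. *)
Definition inv_conj {R : realType} (r : R) : R := (r - 1) / r.

Definition four_rr' {R : realType} (r : R) : R := 4 * inv_conj r / r.

Definition varkappa {R : realType} (r : R) : R :=
  sup [set (1 + u `^ r^-1) * (1 + u `^ inv_conj r) / (1 + u `^ 2^-1) ^+ 2
      | u in `]0, 1[%classic].

(* Put s = e^(m+d), t = e^(m-d) and sh y = e^y - e^(-y).  After division by e^(rm), the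
   lower bound in (l1) reads 4/(rr') sh(ry)^2 <= sh(ry)^2 - sh((r-2)y)^2 with y = d/2; after
   division by e^(2rm), the inequality
     4 (r-1) (s t^(r-1) - t s^(r-1))^2 <= (r-2)^2 ((s^r + t^r)^2 - (s t^(r-1) + t s^(r-1))^2)
   reads 4 (r-1) sh((r-2)y)^2 <= (r-2)^2 (sh(ry)^2 - sh((r-2)y)^2) with y = d.  Both amount
   to r^2 sh((r-2)y)^2 <= (r-2)^2 sh(ry)^2, which holds since |r-2| <= r and sh(x)/x is
   nondecreasing on [0, +oo) (its derivative has the sign of x ch x - sh x >= 0).  Given the
   second one, (l4) is the Cauchy-Schwarz inequality for the unit vector (|b|, sqrt(1-b^2)).
   The remaining bounds in (l1) and (l2) are AM-GM, 2 (st)^(r/2) <= s t^(r-1) + t s^(r-1),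
   and, writing t = x s, the definition of varkappa at u = x^r.  Finally (l3) and (l5) are
   affine in b, so they follow from their cases b = 1 and b = -1, which are (l1) and (l2)
   combined with 4/(rr') <= 1 <= varkappa r. *)

From mathcomp Require Import all_boot all_order all_algebra.
From mathcomp Require Import all_classical all_reals all_analysis.
From mathcomp Require Import ring lra.
Import Order.TTheory GRing.Theory Num.Theory.
Local Open Scope ring_scope.

Lemma AGM2_le {R : realFieldType} (x y z : R) : 0 <= x -> 0 <= y -> 0 <= z ->
  x * y = z ^+ 2 -> 2 * z <= x + y.
Proof.
move=> x0 y0 z0 xyz; rewrite -ler_sqr ?nnegrE ?addr_ge0 ?mulr_ge0 // exprMn -xyz -subr_ge0.
have -> : (x + y) ^+ 2 - 2 ^+ 2 * (x * y) = (x - y) ^+ 2 by ring.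
exact: sqr_ge0.
Qed.

Lemma ler_affine_pm1 {R : realFieldType} (p q p' q' b : R) : -1 <= b -> b <= 1 ->
  p + q <= p' + q' -> p - q <= p' - q' -> p + b * q <= p' + b * q'.
Proof.
move=> b1 b2 hD hB; rewrite -subr_ge0.
have -> : p' + b * q' - (p + b * q)
    = ((1 + b) * (p' + q' - (p + q)) + (1 - b) * (p' - q' - (p - q))) / 2 by field.
by apply: divr_ge0 => //; apply: addr_ge0; apply: mulr_ge0; rewrite ?subr_ge0; lra.
Qed.

Lemma sqr_unit_dot_le {R : realFieldType} (a b x y : R) :
  a ^+ 2 + b ^+ 2 = 1 -> (a * x + b * y) ^+ 2 <= x ^+ 2 + y ^+ 2.
Proof.
move=> ab1; rewrite -subr_ge0.
have -> : x ^+ 2 + y ^+ 2 - (a * x + b * y) ^+ 2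
    = (a * y - b * x) ^+ 2 + (1 - (a ^+ 2 + b ^+ 2)) * (x ^+ 2 + y ^+ 2) by ring.
by rewrite ab1 subrr mul0r addr0 sqr_ge0.
Qed.

Section real_powers.
Variable R : realType.
Implicit Types r s t x y c m d p q u v : R.

Lemma sqr_powR_half x r : 0 <= x -> (x `^ (r / 2)) ^+ 2 = x `^ r.
Proof.
move=> x0; rewrite -powR_mulrn ?powR_ge0 // -powRrM.
by congr (_ `^ _); field.
Qed.

Lemma powR_le1 u x : 0 < u <= 1 -> 0 <= x -> u `^ x <= 1.
Proof. by move=> u01 x0; rewrite -(powRr0 u) ger_powR. Qed.

Definition sh x := expR x - expR (- x).
Definition ch x := expR x + expR (- x).

Lemma is_derive_sh x : is_derive x 1 sh (ch x).
Proof.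
have -> : sh = expR - (expR \o -%R) by apply/funext.
by apply: is_derive_eq; rewrite /ch mulrN1 opprK.
Qed.

Lemma is_derive_ch x : is_derive x 1 ch (sh x).
Proof.
have -> : ch = expR + (expR \o -%R) by apply/funext.
by apply: is_derive_eq; rewrite /sh mulrN1.
Qed.
#[local] Existing Instances is_derive_sh is_derive_ch.

Lemma sh0 : sh 0 = 0.
Proof. by rewrite /sh oppr0 subrr. Qed.

Lemma shN x : sh (- x) = - sh x.
Proof. by rewrite /sh opprK opprB. Qed.

Lemma sh_ge0 x : 0 <= x -> 0 <= sh x.
Proof. by move=> x0; rewrite /sh subr_ge0 ler_expR; lra. Qed.

Lemma sqr_sh_norm x : sh `|x| ^+ 2 = sh x ^+ 2.
Proof. by case: (leP 0 x) => [/ger0_norm -> | /ltr0_norm ->] //; rewrite shN sqrrN. Qed.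

Lemma sqr_ch x : ch x ^+ 2 = sh x ^+ 2 + 4.
Proof. by rewrite /ch /sh expRN; field; rewrite gt_eqF ?expR_gt0. Qed.

Lemma mul_shBD p q : sh (p - q) * sh (p + q) = sh p ^+ 2 - sh q ^+ 2.
Proof.
rewrite /sh !opprD !opprK !expRD !expRN.
by field; rewrite !gt_eqF ?expR_gt0.
Qed.

Lemma expR_subDB m d : expR (m + d) - expR (m - d) = expR m * sh d.
Proof. by rewrite !expRD /sh; ring. Qed.

Lemma expR_addDB m d : expR (m + d) + expR (m - d) = expR m * ch d.
Proof. by rewrite !expRD /ch; ring. Qed.

Lemma ger0_derive_ler (f f' : R -> R) a b :
  (forall x, is_derive x 1 f (f' x)) -> (forall x, a < x < b -> 0 <= f' x) ->
  a <= b -> f a <= f b.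
Proof.
move=> df f'_ge0 ab; apply: (@ger0_derive1_ndecr R f a b) => //.
- move=> x; rewrite in_itv /= => xab.
  by have [_ dfx] := df x; rewrite derive1E dfx; apply: f'_ge0.
- by apply: derivable_within_continuous => x _; have [dfx _] := df x.
Qed.

Lemma ler_ch c y : 0 <= c -> c <= y -> ch c <= ch y.
Proof.
move=> c0 cy; rewrite -subr_ge0.
have -> : ch y - ch c = (expR y - expR c) * (1 - expR (- (y + c))).
  by rewrite /ch !expRN expRD; field; rewrite !gt_eqF ?expR_gt0.
by rewrite mulr_ge0 // subr_ge0 ?ler_expR // expR_le1; lra.
Qed.

Lemma sh_le_mul_ch x : 0 <= x -> sh x <= x * ch x.
Proof.
move=> x0.
have dg y : is_derive y 1 (fun y => y * ch y - sh y) (y * sh y).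
  have -> : (fun y => y * ch y - sh y) = id * ch - sh by apply/funext.
  by apply: is_derive_eq; rewrite -[LHS]/(y * sh y + ch y * 1 - ch y) mulr1 addrK.
have := @ger0_derive_ler _ _ 0 x dg _ x0; rewrite mul0r sh0 subr0 subr_ge0.
by apply => y /andP[y0 _]; rewrite mulr_ge0 ?sh_ge0 ?ltW.
Qed.

Lemma sh_ratio_le c m : 0 <= c -> c <= m -> m * sh c <= c * sh m.
Proof.
move=> c0 cm.
have dk y : is_derive y 1 (fun y => c * sh y - y * sh c) (c * ch y - sh c).
  have -> : (fun y => c * sh y - y * sh c) = cst c * sh - id * cst (sh c).
    by apply/funext.
  apply: is_derive_eq.
  by rewrite -[LHS]/(c * ch y + sh y * 0 - (y * 0 + sh c * 1)) !mulr0 addr0 add0r mulr1.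
have := @ger0_derive_ler _ _ c m dk _ cm; rewrite /= subrr subr_ge0.
apply => y /andP[cy _]; rewrite subr_ge0.
by apply: le_trans (sh_le_mul_ch _ c0) _; rewrite ler_wpM2l // ler_ch // ltW.
Qed.

Lemma sh_ratio_sqr_le u v x : `|u| <= `|v| ->
  v ^+ 2 * sh (x * u) ^+ 2 <= u ^+ 2 * sh (x * v) ^+ 2.
Proof.
move=> uv.
have [-> | x0] := eqVneq x 0; first by rewrite !mul0r sh0 expr0n /= !mulr0.
have xuv : `|x * u| <= `|x * v| by rewrite !normrM ler_wpM2l.
have := sh_ratio_le _ _ (normr_ge0 _) xuv.
rewrite -ler_sqr ?nnegrE ?mulr_ge0 ?sh_ge0 //.
rewrite !exprMn (sqr_sh_norm (x * u)) (sqr_sh_norm (x * v)).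
rewrite (real_normK (num_real (x * u))) (real_normK (num_real (x * v))) !exprMn.
have x2 : 0 < x ^+ 2 by rewrite lt_def sqrf_eq0 x0 sqr_ge0.
by rewrite -!(mulrA (x ^+ 2)) ler_pM2l.
Qed.

Lemma norm_2Br_le r : 1 <= r -> `|2 - r| <= `|r|.
Proof. by move=> r1; rewrite [`|r|]ger0_norm ?ler_norml; lra. Qed.

Lemma four_rr'_le_subr r x y : 1 <= r ->
  (r / 2) ^+ 2 * y <= ((r - 2) / 2) ^+ 2 * x -> four_rr' r * x <= x - y.
Proof.
move=> r1 h; have r0 : r != 0 by rewrite gt_eqF //; lra.
rewrite -subr_ge0.
have -> : x - y - four_rr' r * x = (((r - 2) / 2) ^+ 2 * x - (r / 2) ^+ 2 * y) / (r / 2) ^+ 2.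
  by rewrite /four_rr' /inv_conj; field.
by rewrite divr_ge0 ?sqr_ge0 // subr_ge0.
Qed.

Lemma four_rr'_le1 r : 1 <= r -> four_rr' r <= 1.
Proof.
move=> r1; have r0 : r != 0 by rewrite gt_eqF //; lra.
rewrite -subr_ge0 (_ : 1 - four_rr' r = ((r - 2) / r) ^+ 2) ?sqr_ge0 //.
by rewrite /four_rr' /inv_conj; field.
Qed.

Lemma expR_sub_mul_lb r m d : 1 <= r ->
  four_rr' r * (expR ((m + d) * (r / 2)) - expR ((m - d) * (r / 2))) ^+ 2
  <= (expR (m + d) - expR (m - d)) * (expR ((m + d) * (r - 1)) - expR ((m - d) * (r - 1))).
Proof.
move=> r1; rewrite !(mulrDl m d) !(mulrBl _ m d) !expR_subDB [X in _ <= X]mulrACA.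
have -> : expR m * expR (m * (r - 1)) = expR (m * (r / 2)) ^+ 2.
  by rewrite -expRD -expRM_natr; congr expR; field.
have -> : sh d * sh (d * (r - 1)) = sh (d * (r / 2)) ^+ 2 - sh (d * ((r - 2) / 2)) ^+ 2.
  by rewrite -mul_shBD; congr (sh _ * sh _); field.
rewrite exprMn mulrCA ler_wpM2l ?sqr_ge0 // four_rr'_le_subr // sh_ratio_sqr_le //.
by rewrite !normrM ler_wpM2r // distrC norm_2Br_le.
Qed.

Lemma expR_cross_sub_sqr_le r m d : 1 <= r ->
  4 * (r - 1) * (expR (m + d) * expR ((m - d) * (r - 1))
                 - expR (m - d) * expR ((m + d) * (r - 1))) ^+ 2
  <= (r - 2) ^+ 2 * ((expR ((m + d) * r) + expR ((m - d) * r)) ^+ 2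
     - (expR (m + d) * expR ((m - d) * (r - 1))
        + expR (m - d) * expR ((m + d) * (r - 1))) ^+ 2).
Proof.
move=> r1; rewrite -!expRD.
have -> : m + d + (m - d) * (r - 1) = m * r + d * (2 - r) by ring.
have -> : m - d + (m + d) * (r - 1) = m * r - d * (2 - r) by ring.
rewrite (mulrDl m d) (mulrBl _ m d) expR_subDB !expR_addDB !exprMn !sqr_ch.
have := sh_ratio_sqr_le (2 - r) r d (norm_2Br_le _ r1).
set E := expR (m * r) ^+ 2; set S := sh (d * r) ^+ 2; set T := sh (d * (2 - r)) ^+ 2.
rewrite -subr_ge0 => h; rewrite -subr_ge0.
have -> : (r - 2) ^+ 2 * (E * (S + 4) - E * (T + 4)) - 4 * (r - 1) * (E * T)
  = E * ((2 - r) ^+ 2 * S - r ^+ 2 * T) by ring.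
by rewrite mulr_ge0 ?sqr_ge0.
Qed.

Lemma expR_midpoint s t : 0 < s -> 0 < t ->
  exists m d, s = expR (m + d) /\ t = expR (m - d).
Proof.
move=> s0 t0; exists ((ln s + ln t) / 2), ((ln s - ln t) / 2).
by split; [rewrite -{1}(lnK s0) | rewrite -{1}(lnK t0)]; congr expR; field.
Qed.

Definition kappa_ratio r u :=
  (1 + u `^ r^-1) * (1 + u `^ inv_conj r) / (1 + u `^ 2^-1) ^+ 2.

Lemma kappa_ratio_le4 r u : 1 <= r -> 0 < u < 1 -> kappa_ratio r u <= 4.
Proof.
move=> r1 /andP[u0 /ltW u1].
have u01 : 0 < u <= 1 by rewrite u0.
have a1 : u `^ r^-1 <= 1 by rewrite powR_le1 // invr_ge0; lra.
have b1 : u `^ inv_conj r <= 1 by rewrite powR_le1 // divr_ge0 //; lra.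
have c0 := powR_ge0 u 2^-1.
have ab4 : (1 + u `^ r^-1) * (1 + u `^ inv_conj r) <= 2 * 2.
  by apply: ler_pM; rewrite ?addr_ge0 ?powR_ge0 //; lra.
have c1 : 1 <= (1 + u `^ 2^-1) ^+ 2 by rewrite exprn_ege1 //; lra.
by rewrite /kappa_ratio ler_pdivrMr ?exprn_gt0 //; lra.
Qed.

Lemma kappa_ratio_le_varkappa r u : 1 <= r -> 0 < u < 1 -> kappa_ratio r u <= varkappa r.
Proof.
move=> r1 u01; apply: ub_le_sup; last by exists u; rewrite //= in_itv.
by exists 4 => _ [v v01 <-]; apply: kappa_ratio_le4; rewrite // -in_itv.
Qed.

Lemma kappa_ratio_ge1 r u : 1 <= r -> 0 < u -> 1 <= kappa_ratio r u.
Proof.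
move=> r1 u0; have r0 : r != 0 by rewrite gt_eqF //; lra.
have ab : u `^ r^-1 * u `^ inv_conj r = u.
  rewrite -powRD; last by apply/implyP => _; rewrite gt_eqF.
  rewrite -[RHS](powRr1 (ltW u0)).
  by congr (_ `^ _); rewrite /inv_conj; field.
have cc : u `^ 2^-1 ^+ 2 = u by rewrite powR12_sqrt ?sqr_sqrtr ?ltW.
rewrite /kappa_ratio ler_pdivlMr ?exprn_gt0 ?ltr_pwDl ?powR_ge0 // mul1r.
suff : 2 * u `^ 2^-1 <= u `^ r^-1 + u `^ inv_conj r by lra.
by apply: AGM2_le; rewrite ?powR_ge0 // ab cc.
Qed.

Lemma varkappa_ge1 r : 1 <= r -> 1 <= varkappa r.
Proof.
move=> r1; have half01 : 0 < (2^-1 : R) < 1 by apply/andP; split; lra.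
apply: le_trans (kappa_ratio_ge1 _ _ r1 _) (kappa_ratio_le_varkappa _ _ r1 half01).
by case/andP: half01.
Qed.

(* kappa_ratio 1 u = 2 (1 + u) / (1 + sqrt u)^2 tends to 2 as u -> 0; at u = w^2 with
   w = (2 - k) / 8 it already exceeds any k < 2. *)
Lemma varkappa1_ge2 : 2 <= varkappa (1 : R).
Proof.
rewrite leNgt; apply/negP => k2; set k := varkappa 1 in k2.
set w := (2 - k) / 8.
have w0 : 0 < w by rewrite divr_gt0 //; lra.
have w1 : w < 1 by rewrite ltr_pdivrMr //; have := varkappa_ge1 _ (lexx 1); rewrite -/k; lra.
have w2 : 0 < w ^+ 2 < 1 by rewrite exprn_gt0 //= expr_lt1 ?ltW.
have := kappa_ratio_le_varkappa _ _ (lexx 1) w2.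
rewrite /kappa_ratio invr1 powRr1 ?sqr_ge0 // /inv_conj subrr mul0r powRr0.
rewrite powR12_sqrt ?sqr_ge0 // sqrtr_sqr (ger0_norm (ltW w0)) -/k.
rewrite ler_pdivrMr; last by rewrite exprn_gt0 //; lra.
apply/negP; rewrite -ltNge (_ : k = 2 - 8 * w); last by rewrite /w; field.
rewrite -subr_gt0.
have -> : (1 + w ^+ 2) * (1 + 1) - (2 - 8 * w) * (1 + w) ^+ 2
  = w * (4 + 16 * w + 8 * w ^+ 2) by ring.
by rewrite mulr_gt0 //; have := sqr_ge0 w; lra.
Qed.

Lemma varkappa_scaled_ub r x : 1 <= r -> 0 <= x <= 1 ->
  (1 + x) * (1 + x `^ (r - 1)) <= varkappa r * (1 + x `^ (r / 2)) ^+ 2.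
Proof.
move=> r1 /andP[x0 x1]; have k1 := varkappa_ge1 _ r1.
have [r0 r20] : r != 0 /\ r / 2 != 0 by split; apply/eqP; lra.
have [-> | x_neq0] := eqVneq x 0.
  rewrite (powR0 r20) !addr0 expr1n mulr1 mul1r.
  (* 0 `^ 0 = 1, so for r = 1 the left-hand side is 2 *)
  have [-> | r_neq1] := eqVneq r 1; last by rewrite powR0 ?addr0 // subr_eq0.
  by rewrite subrr powRr0; apply: varkappa1_ge2.
have [-> | x_neq1] := eqVneq x 1.
  by rewrite !powR1 /= -expr2 ler_peMl ?sqr_ge0.
have xpos : 0 < x by rewrite lt_def x_neq0.
have xlt1 : x < 1 by rewrite lt_def eq_sym x_neq1.
have xr01 : 0 < x `^ r < 1.
  rewrite powR_gt0 //=.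
  have := @gt0_ltr_powR R r (lt_le_trans ltr01 r1) x 1; rewrite powR1.
  by apply; rewrite ?nnegrE.
have := kappa_ratio_le_varkappa _ _ r1 xr01.
rewrite /kappa_ratio -!powRrM mulfV // powRr1 //.
rewrite (_ : r * inv_conj r = r - 1); last by rewrite /inv_conj; field.
by rewrite ler_pdivrMr // exprn_gt0 // ltr_pwDl // powR_ge0.
Qed.

Lemma powR_add_mul_ub s t r : 0 <= s -> 0 <= t -> 1 <= r ->
  (s + t) * (s `^ (r - 1) + t `^ (r - 1)) <= varkappa r * (s `^ (r / 2) + t `^ (r / 2)) ^+ 2.
Proof.
move=> s0 t0 r1.
wlog ts : s t s0 t0 / t <= s.
  move=> H; have [ts | /ltW st] := leP t s; first exact: H.
  by rewrite addrC [_ `^ (r - 1) + _]addrC [_ `^ (r / 2) + _]addrC H.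
have k0 : 0 <= varkappa r by apply: le_trans ler01 (varkappa_ge1 _ r1).
have [s_eq0 | s_neq0] := eqVneq s 0.
  have -> : t = 0 by apply/le_anti; rewrite t0 -s_eq0 ts.
  by rewrite s_eq0 addr0 mul0r mulr_ge0 ?sqr_ge0.
have s_gt0 : 0 < s by rewrite lt_def s_neq0.
have [x /andP[x0 x1] ->] : exists2 x, 0 <= x <= 1 & t = s * x.
  by exists (t / s); rewrite ?divr_ge0 ?ler_pdivrMr ?mul1r // mulrC divfK.
rewrite !powRM //.
have -> : (s + s * x) * (s `^ (r - 1) + s `^ (r - 1) * x `^ (r - 1))
    = s * s `^ (r - 1) * ((1 + x) * (1 + x `^ (r - 1))) by ring.
have -> : varkappa r * (s `^ (r / 2) + s `^ (r / 2) * x `^ (r / 2)) ^+ 2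
    = s `^ (r / 2) ^+ 2 * (varkappa r * (1 + x `^ (r / 2)) ^+ 2) by ring.
rewrite mulr_powRB1 ?sqr_powR_half //; last exact: lt_le_trans r1.
by rewrite ler_wpM2l ?powR_ge0 // varkappa_scaled_ub // x0 x1.
Qed.

Lemma normr_mul_le_of_sqr_bound r b A B D :
  1 < r -> -1 <= b -> b <= 1 -> 0 <= A -> 0 <= B ->
  4 * (r - 1) * D ^+ 2 <= (r - 2) ^+ 2 * (A ^+ 2 - B ^+ 2) ->
  `|b| * `|D| <= `|r - 2| / (2 * Num.sqrt (r - 1)) * (A - Num.sqrt (1 - b ^+ 2) * B).
Proof.
move=> r_gt1 b1 b2 A0 B0 hD.
set c := `|r - 2| / (2 * Num.sqrt (r - 1)); set g := Num.sqrt (1 - b ^+ 2).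
have c0 : 0 <= c by rewrite divr_ge0 ?mulr_ge0 ?sqrtr_ge0.
have c2 : c ^+ 2 = (r - 2) ^+ 2 / (4 * (r - 1)).
  rewrite expr_div_n exprMn real_normK ?num_real // sqr_sqrtr; last lra.
  by congr (_ / (_ * _)); rewrite expr2 -natrM.
have g2 : `|b| ^+ 2 + g ^+ 2 = 1.
  rewrite real_normK ?num_real // sqr_sqrtr; first by ring.
  by rewrite (_ : 1 - b ^+ 2 = (1 - b) * (1 + b)); [rewrite mulr_ge0 //; lra | ring].
have cBA : D ^+ 2 + (c * B) ^+ 2 <= (c * A) ^+ 2.
  rewrite -subr_ge0 !(exprMn _ c) c2.
  have -> : (r - 2) ^+ 2 / (4 * (r - 1)) * A ^+ 2
        - (D ^+ 2 + (r - 2) ^+ 2 / (4 * (r - 1)) * B ^+ 2)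
      = ((r - 2) ^+ 2 * (A ^+ 2 - B ^+ 2) - 4 * (r - 1) * D ^+ 2) / (4 * (r - 1)).
    by field; apply/eqP; lra.
  by rewrite divr_ge0 ?subr_ge0 //; lra.
have dot := sqr_unit_dot_le _ _ `|D| (c * B) g2.
rewrite real_normK ?num_real // in dot.
have : `|b| * `|D| + g * (c * B) <= c * A.
  rewrite -ler_sqr ?nnegrE ?addr_ge0 ?mulr_ge0 ?sqrtr_ge0 //.
  exact: le_trans dot cBA.
lra.
Qed.

Section power_pair.
Variables s t r : R.
Hypotheses (s0 : 0 <= s) (t0 : 0 <= t) (r1 : 1 <= r).

Let r_gt0 : 0 < r. Proof. by apply: lt_le_trans r1. Qed.

Lemma mul_powR_subE : (s - t) * (s `^ (r - 1) - t `^ (r - 1))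
  = s `^ r + t `^ r - (s * t `^ (r - 1) + t * s `^ (r - 1)).
Proof. by rewrite -(mulr_powRB1 s0 r_gt0) -(mulr_powRB1 t0 r_gt0); ring. Qed.

Lemma mul_powR_addE : (s + t) * (s `^ (r - 1) + t `^ (r - 1))
  = s `^ r + t `^ r + (s * t `^ (r - 1) + t * s `^ (r - 1)).
Proof. by rewrite -(mulr_powRB1 s0 r_gt0) -(mulr_powRB1 t0 r_gt0); ring. Qed.

Lemma sqr_powR_subE : (s `^ (r / 2) - t `^ (r / 2)) ^+ 2
  = s `^ r + t `^ r - 2 * (s * t) `^ (r / 2).
Proof. by rewrite powRM // -(sqr_powR_half _ r s0) -(sqr_powR_half _ r t0); ring. Qed.

Lemma sqr_powR_addE : (s `^ (r / 2) + t `^ (r / 2)) ^+ 2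
  = s `^ r + t `^ r + 2 * (s * t) `^ (r / 2).
Proof. by rewrite powRM // -(sqr_powR_half _ r s0) -(sqr_powR_half _ r t0); ring. Qed.

Lemma powR_cross_ge : 2 * (s * t) `^ (r / 2) <= s * t `^ (r - 1) + t * s `^ (r - 1).
Proof.
apply: AGM2_le; rewrite ?mulr_ge0 ?powR_ge0 //.
rewrite sqr_powR_half ?mulr_ge0 // powRM //.
by rewrite -(mulr_powRB1 s0 r_gt0) -(mulr_powRB1 t0 r_gt0); ring.
Qed.

Lemma powR_sub_mul_lb :
  four_rr' r * (s `^ (r / 2) - t `^ (r / 2)) ^+ 2 <= (s - t) * (s `^ (r - 1) - t `^ (r - 1)).
Proof.
have [-> | r_neq1] := eqVneq r 1.
  by rewrite /four_rr' /inv_conj subrr !powRr0 subrr !(mul0r, mulr0).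
have r_gt1 : 1 < r by rewrite lt_neqAle eq_sym r_neq1 r1.
have [r20 r10] : r / 2 != 0 /\ r - 1 != 0 by split; apply/eqP; lra.
have f1 := four_rr'_le1 _ r1.
have [-> | s_neq0] := eqVneq s 0.
  rewrite !powR0 // !sub0r sqrrN mulrNN mulr_powRB1 // sqr_powR_half //.
  by rewrite ler_piMl ?powR_ge0.
have [-> | t_neq0] := eqVneq t 0.
  rewrite !powR0 // !subr0 mulr_powRB1 // sqr_powR_half //.
  by rewrite ler_piMl ?powR_ge0.
have s_gt0 : 0 < s by rewrite lt_def s_neq0.
have t_gt0 : 0 < t by rewrite lt_def t_neq0.
have [m [d [-> ->]]] := expR_midpoint _ _ s_gt0 t_gt0.
by rewrite -!expRM; apply: expR_sub_mul_lb.
Qed.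

Lemma powR_sub_mul_ub :
  (s - t) * (s `^ (r - 1) - t `^ (r - 1)) <= (s `^ (r / 2) - t `^ (r / 2)) ^+ 2.
Proof. by rewrite mul_powR_subE sqr_powR_subE; have := powR_cross_ge; lra. Qed.

Lemma powR_add_mul_lb :
  (s `^ (r / 2) + t `^ (r / 2)) ^+ 2 <= (s + t) * (s `^ (r - 1) + t `^ (r - 1)).
Proof. by rewrite mul_powR_addE sqr_powR_addE; have := powR_cross_ge; lra. Qed.

Lemma powR_cross_sub_sqr_le : 1 < r ->
  4 * (r - 1) * (s * t `^ (r - 1) - t * s `^ (r - 1)) ^+ 2
  <= (r - 2) ^+ 2 * ((s `^ r + t `^ r) ^+ 2 - (s * t `^ (r - 1) + t * s `^ (r - 1)) ^+ 2).
Proof.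
move=> r_gt1; have [r0 r10] : r != 0 /\ r - 1 != 0 by split; apply/eqP; lra.
have [-> | s_neq0] := eqVneq s 0.
  rewrite !powR0 // !mul0r !mulr0 !add0r oppr0 expr0n /= mulr0 subr0.
  by rewrite mulr_ge0 ?sqr_ge0.
have [-> | t_neq0] := eqVneq t 0.
  rewrite !powR0 // !mul0r !mulr0 !addr0 subrr expr0n /= mulr0 subr0.
  by rewrite mulr_ge0 ?sqr_ge0.
have s_gt0 : 0 < s by rewrite lt_def s_neq0.
have t_gt0 : 0 < t by rewrite lt_def t_neq0.
have [m [d [-> ->]]] := expR_midpoint _ _ s_gt0 t_gt0.
by rewrite -!expRM; apply: expR_cross_sub_sqr_le (ltW r_gt1).
Qed.

Lemma powR_mixed_lb b : -1 <= b -> b <= 1 ->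
  four_rr' r * (s `^ r + t `^ r + 2 * b * (s * t) `^ (r / 2))
  <= s `^ r + t `^ r + b * (s * t `^ (r - 1) + t * s `^ (r - 1)).
Proof.
move=> b1 b2; have := powR_sub_mul_lb; have := powR_cross_ge.
rewrite mul_powR_subE sqr_powR_subE.
set A := s `^ r + t `^ r; set B := s * t `^ (r - 1) + t * s `^ (r - 1).
set C := (s * t) `^ (r / 2) => CB lb.
have -> : four_rr' r * (A + 2 * b * C) = four_rr' r * A + b * (four_rr' r * (2 * C)).
  by ring.
apply: ler_affine_pm1 => //; last by rewrite -mulrBr.
have AC : 0 <= A + 2 * C by rewrite !addr_ge0 ?mulr_ge0 ?powR_ge0.
by rewrite -mulrDr; apply: le_trans (ler_piMl AC (four_rr'_le1 _ r1)) _; lra.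
Qed.

Lemma powR_mixed_ub b : -1 <= b -> b <= 1 ->
  s `^ r + t `^ r + b * (s * t `^ (r - 1) + t * s `^ (r - 1))
  <= varkappa r * (s `^ r + t `^ r + 2 * b * (s * t) `^ (r / 2)).
Proof.
move=> b1 b2; have := powR_add_mul_ub _ _ _ s0 t0 r1; have := powR_cross_ge.
have := sqr_ge0 (s `^ (r / 2) - t `^ (r / 2)).
rewrite mul_powR_addE sqr_powR_addE sqr_powR_subE.
set A := s `^ r + t `^ r; set B := s * t `^ (r - 1) + t * s `^ (r - 1).
set C := (s * t) `^ (r / 2) => AC CB ub.
have -> : varkappa r * (A + 2 * b * C) = varkappa r * A + b * (varkappa r * (2 * C)).
  by ring.
apply: ler_affine_pm1 => //; first by rewrite -mulrDr.
by rewrite -mulrBr; apply: le_trans _ (ler_peMl AC (varkappa_ge1 _ r1)); lra.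
Qed.

Lemma powR_cross_sub_le b : -1 <= b -> b <= 1 -> 1 < r ->
  `|b| * `|s * t `^ (r - 1) - t * s `^ (r - 1)|
  <= `|r - 2| / (2 * Num.sqrt (r - 1))
     * (s `^ r + t `^ r - Num.sqrt (1 - b ^+ 2) * (s * t `^ (r - 1) + t * s `^ (r - 1))).
Proof.
move=> b1 b2 r_gt1; apply: normr_mul_le_of_sqr_bound => //; last exact: powR_cross_sub_sqr_le.
  by rewrite addr_ge0 ?powR_ge0.
by rewrite addr_ge0 ?mulr_ge0 ?powR_ge0.
Qed.

End power_pair.

End real_powers.

Theorem lemma5 (R : realType) (s t r b : R)
  (hs : 0 <= s) (ht : 0 <= t) (hr : 1 <= r) (hb1 : -1 <= b) (hb2 : b <= 1) :
  [/\ (* (l1) *)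
      four_rr' r * (s `^ (r / 2) - t `^ (r / 2)) ^+ 2
        <= (s - t) * (s `^ (r - 1) - t `^ (r - 1))
      /\ (s - t) * (s `^ (r - 1) - t `^ (r - 1))
        <= (s `^ (r / 2) - t `^ (r / 2)) ^+ 2,
      (* (l2) *)
      (s `^ (r / 2) + t `^ (r / 2)) ^+ 2
        <= (s + t) * (s `^ (r - 1) + t `^ (r - 1))
      /\ (s + t) * (s `^ (r - 1) + t `^ (r - 1))
        <= varkappa r * (s `^ (r / 2) + t `^ (r / 2)) ^+ 2,
      (* (l3) *)
      four_rr' r * (s `^ r + t `^ r + 2 * b * (s * t) `^ (r / 2))
        <= s `^ r + t `^ r + b * (s * t `^ (r - 1) + t * s `^ (r - 1)),
      (* (l4); for r = 1 the constant is +oo, so the claim is vacuous there *)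
      1 < r -> `|b| * `|s * t `^ (r - 1) - t * s `^ (r - 1)|
        <= `|r - 2| / (2 * Num.sqrt (r - 1)) *
           (s `^ r + t `^ r - Num.sqrt (1 - b ^+ 2) * (s * t `^ (r - 1) + t * s `^ (r - 1)))
    & (* (l5) *)
      s `^ r + t `^ r + b * (s * t `^ (r - 1) + t * s `^ (r - 1))
        <= varkappa r * (s `^ r + t `^ r + 2 * b * (s * t) `^ (r / 2))].
Proof.
split.
- by split; [apply: powR_sub_mul_lb | apply: powR_sub_mul_ub].
- by split; [apply: powR_add_mul_lb | apply: powR_add_mul_ub].
- exact: powR_mixed_lb.
- exact: powR_cross_sub_le.
- exact: powR_mixed_ub.
Qed.
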